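(* Let $t$ be a closed term and $\pi\triangleright\ \vdash^{(m,e)} t:\mathtt{n}$ a derivation (with empty type context) in the silly multi type system. Then there is a $\to_w$-normal term $n$ and a reduction sequence $d: t\to_y^* n$ such that the number of $\to_{ym}$ steps in $d$ is exactly $m$ and the number of $\to_{yeAY}$ and $\to_{yeYN}$ steps in $d$ is exactly $e$.
   Context: Terms: $t ::= x \mid \lambda x.t \mid t\,u \mid t[x\backslash u]$ ($t[x\backslash u]$ an explicit substitution binding $x$ in $t$; terms up to $\alpha$). Values $v ::= \lambda x.t$. Substitution contexts $S ::= \langle\cdot\rangle\mid S[x\backslash u]$. Weak contexts $W ::= \langle\cdot\rangle \mid W\,t \mid t\,W \mid t[x\backslash W] \mid W[x\backslash u]$. For a class of contexts $K$, $K\langle\langle t\rangle\rangle$ is plugging without capture of free variables of $t$. Root rules: $S\langle\lambda x.t\rangle u\mapsto_m S\langle t[x\backslash u]\rangle$; $K\langle\langle x\rangle\rangle[x\backslash u]\mapsto_{e_K} K\langle\langle u\rangle\rangle[x\backslash u]$; $t[x\backslash S\langle v\rangle]\mapsto_{gcv} S\langle t\rangle$ if $x\notin\mathrm{fv}(t)$. $\to_w$ is the union of the closures under weak contexts of $\mapsto_m$, $\mapsto_{e_W}$ ($K$ = weak contexts), $\mapsto_{gcv}$. Call-by-silly strategy: answers $a ::= v\mid a[x\backslash a']$; name contexts $N ::= \langle\cdot\rangle\mid N t\mid N[x\backslash t]$; auxiliary contexts $A ::= \langle\cdot\rangle\mid a[x\backslash A]\mid A[x\backslash t]$; silly contexts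 $Y ::= A\langle N\rangle$; $\to_{ym} := Y\langle\mapsto_m\rangle$; $\to_{yeAY} := A\langle\mapsto_{e_Y}\rangle$; $\to_{yeYN} := Y\langle\mapsto_{e_N}\rangle$; $\to_{ygcv}:=Y\langle\mapsto_{gcv}\rangle$; $\to_y$ is their union. Silly multi types: linear types $L ::= \mathtt{n} \mid M\multimap L$; multi types $M ::= [L_i]_{i\in I}$ finite multisets ($\mathbf{0}$ empty, $\uplus$ sum). Type contexts $\Gamma$ map variables to multi types with finite support; $\uplus$ pointwise; $\Gamma\setminus\!\!\setminus x$ sets $x$ to $\mathbf{0}$. Rules: (ax) $x:[L]\vdash^{(0,1)} x:L$; (many) from $(\Gamma_i\vdash^{(m_i,e_i)} t : L_i)_{i\in I}$, $I$ finite possibly empty, infer $\uplus_i\Gamma_i\vdash^{(\sum m_i,\sum e_i)} t : [L_i]_{i\in I}$; ($\mathrm{ax}_\lambda$) $\vdash^{(0,0)}\lambda x.t:\mathtt{n}$; ($\lambda$) from $\Gamma\vdash^{(m,e)}t:L$ infer $\Gamma\setminus\!\!\setminus x\vdash^{(m,e)}\lambda x.t:\Gamma(x)\multimap L$; (@) from $\Gamma\vdash^{(m,e)} t : M\multimap L$ and $\Delta\vdash^{(m',e')} u : M\uplus[\mathtt{n}]$ infer $\Gamma\uplus\Delta\vdash^{(m+m'+1,e+e')} tu : L$; (ES) from $\Gamma\vdash^{(m,e)} t:L$ and $\Delta\vdash^{(m',e')}u:\Gamma(x)\uplus[\mathtt{n}]$ infer $(\Gamma\setminus\!\!\setminus x)\uplus\Delta\vdash^{(m+m',e+e')}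 t[x\backslash u]:L$. *)

From mathcomp Require Import all_boot.
Set Implicit Arguments. Unset Strict Implicit. Unset Printing Implicit Defensive.

(* ES t u  represents  t[x\u] ; the index 0 in t is bound by the ES. *)
Inductive term : Type :=
| Var of nat
| Lam of term
| App of term & term
| ES of term & term.

Definition upren (f : nat -> nat) : nat -> nat :=
  fun n => if n is k.+1 then (f k).+1 else 0.

Fixpoint ren (f : nat -> nat) (t : term) : term :=
  match t with
  | Var n => Var (f n)
  | Lam b => Lam (ren (upren f) b)
  | App t u => App (ren f t) (ren f u)
  | ES t u => ES (ren (upren f) t) (ren f u)
  end.

Definition lift (k : nat) (t : term) : term := ren (fun j => k + j) t.

Fixpoint occurs (i : nat) (t : term) : bool :=
  match t with
  | Var n => n == i
  | Lam b => occurs i.+1 b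
  | App t u => occurs i t || occurs i u
  | ES t u => occurs i.+1 t || occurs i u
  end.

Definition closed_term (t : term) : Prop := forall i, ~~ occurs i t.

Definition value (t : term) : Prop := exists b, t = Lam b.

Inductive ctx : Type :=
| Hole
| CAppL of ctx & term
| CAppR of term & ctx
| CESL of ctx & term       (* C[x\u] : hole under the ES binder *)
| CESR of term & ctx.

Fixpoint plug (C : ctx) (s : term) : term :=
  match C with
  | Hole => s
  | CAppL C t => App (plug C s) t
  | CAppR t C => App t (plug C s)
  | CESL C u => ES (plug C s) u
  | CESR t C => ES t (plug C s)
  end.

Fixpoint depth (C : ctx) : nat :=
  match C with
  | Hole => 0
  | CAppL C _ => depth C
  | CAppR _ C => depth C
  | CESL C _ => (depth C).+1
  | CESR _ C => depth C
  end.

Fixpoint cplug (C D : ctx) : ctx :=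
  match C with
  | Hole => D
  | CAppL C t => CAppL (cplug C D) t
  | CAppR t C => CAppR t (cplug C D)
  | CESL C u => CESL (cplug C D) u
  | CESR t C => CESR t (cplug C D)
  end.

(* weak contexts: every ctx (W ::= <> | W t | t W | t[x\W] | W[x\u]) *)
Definition is_W (C : ctx) : Prop := True.

Inductive is_S : ctx -> Prop :=
| S_hole : is_S Hole
| S_es S u : is_S S -> is_S (CESL S u).

Inductive answer : term -> Prop :=
| ans_val b : answer (Lam b)
| ans_es a a' : answer a -> answer a' -> answer (ES a a').

Inductive is_N : ctx -> Prop :=
| N_hole : is_N Hole
| N_app N t : is_N N -> is_N (CAppL N t)
| N_es N t : is_N N -> is_N (CESL N t).

Inductive is_A : ctx -> Prop :=
| A_hole : is_A Hole
| A_ans a A : answer a -> is_A A -> is_A (CESR a A)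
| A_es A t : is_A A -> is_A (CESL A t).

Definition is_Y (C : ctx) : Prop :=
  exists A N, is_A A /\ is_N N /\ C = cplug A N.

(* S<\x.b> u  |->m  S<b[x\u]>  (u lifted past the binders of S) *)
Definition root_m (t t' : term) : Prop :=
  exists S b u, is_S S /\ t = App (plug S (Lam b)) u /\
                t' = plug S (ES b (lift (depth S) u)).

(* K<<x>>[x\u]  |->e_K  K<<u>>[x\u] *)
Definition root_e (K : ctx -> Prop) (t t' : term) : Prop :=
  exists C u, K C /\ t = ES (plug C (Var (depth C))) u /\
              t' = ES (plug C (lift (depth C).+1 u)) u.

(* b[x\S<v>]  |->gcv  S<b>  if x notin fv(b) *)
Definition root_gcv (t t' : term) : Prop :=
  exists b S v, is_S S /\ value v /\ t = ES b (plug S v) /\ ~~ occurs 0 b /\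
                t' = plug S (ren (fun j => j.-1 + depth S) b).

Definition step_w (t t' : term) : Prop :=
  exists C r r', is_W C /\ t = plug C r /\ t' = plug C r' /\
    (root_m r r' \/ root_e is_W r r' \/ root_gcv r r').

Definition w_normal (t : term) : Prop := ~ exists t', step_w t t'.

Inductive ylab : Type := YM | YeAY | YeYN | Ygcv.

Definition ystep (l : ylab) (t t' : term) : Prop :=
  exists C r r', t = plug C r /\ t' = plug C r' /\
    match l with
    | YM => is_Y C /\ root_m r r'
    | YeAY => is_A C /\ root_e is_Y r r'
    | YeYN => is_Y C /\ root_e is_N r r'
    | Ygcv => is_Y C /\ root_gcv r r'
    end.

(* reduction sequences t ->y* t' recorded as the list of step labels *)
Inductive yseq : term -> seq ylab -> term -> Prop :=
| ys_nil t : yseq t [::] t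
| ys_cons l t t1 ls t2 : ystep l t t1 -> yseq t1 ls t2 -> yseq t (l :: ls) t2.

Definition is_m_lab (l : ylab) : bool := if l is YM then true else false.
Definition is_e_lab (l : ylab) : bool :=
  match l with YeAY | YeYN => true | _ => false end.

(* multi types are finite multisets, represented as lists up to meq *)
Inductive ltype : Type :=
| TN
| TArr of seq ltype & ltype.

Inductive teq : ltype -> ltype -> Prop :=
| teq_n : teq TN TN
| teq_arr M M' L L' : meq M M' -> teq L L' -> teq (TArr M L) (TArr M' L')
with meq : seq ltype -> seq ltype -> Prop :=
| meq_nil : meq [::] [::]
| meq_skip L L' M M' : teq L L' -> meq M M' -> meq (L :: M) (L' :: M')
| meq_swap L1 L2 M : meq (L1 :: L2 :: M) (L2 :: L1 :: M)
| meq_trans M1 M2 M3 : meq M1 M2 -> meq M2 M3 -> meq M1 M3.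

Definition tctx := nat -> seq ltype.
Definition empty_ctx : tctx := fun _ => [::].
Definition cunion (G D : tctx) : tctx := fun i => G i ++ D i.
Definition single (i : nat) (L : ltype) : tctx :=
  fun j => if j == i then [:: L] else [::].

Inductive typing : tctx -> nat -> nat -> term -> ltype -> Prop :=
| ty_ax i L : typing (single i L) 0 1 (Var i) L
| ty_axlam b : typing empty_ctx 0 0 (Lam b) TN
| ty_lam G m e b L :
    typing G m e b L ->
    typing (fun i => G i.+1) m e (Lam b) (TArr (G 0) L)
| ty_app G D m e m' e' t u M M' L :
    typing G m e t (TArr M L) -> typing_m D m' e' u M' -> meq M' (TN :: M) ->
    typing (cunion G D) (m + m' + 1) (e + e') (App t u) L
| ty_es G D m e m' e' t u M' L :
    typing G m e t L -> typing_m D m' e' u M' -> meq M' (TN :: G 0) ->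
    typing (cunion (fun i => G i.+1) D) (m + m') (e + e') (ES t u) L
with typing_m : tctx -> nat -> nat -> term -> seq ltype -> Prop :=
| tym_nil t : typing_m empty_ctx 0 0 t [::]
| tym_cons G D m e m' e' t L M :
    typing G m e t L -> typing_m D m' e' t M ->
    typing_m (cunion G D) (m + m') (e + e') t (L :: M).

(* Quantitative subject reduction plus progress.  Along a silly step the type
   derivation shrinks exactly as the step is labelled: an ->ym step consumes one
   application rule (m drops by 1), an ->yeAY or ->yeYN step consumes one axiom
   (e drops by 1), and a ->ygcv step keeps (m, e) but shrinks the term.  A term
   of type n in the empty context cannot be stuck on a variable in a silly
   position, since that variable would need a non-empty type assignment; so it
   either steps or is an answer, and answers are w-normal and typed with
   m = e = 0.  Induction on (m + e, size) produces the reduction sequence.  The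
   subject-reduction cases all rest on one fact: along N, A, Y and S contexts
   the hole is typed by exactly one subderivation, which can be replaced. *)

From Pilot Require Import Defs.
From HB Require Import structures.
From mathcomp Require Import all_boot zify.
From Stdlib Require Import Setoid Morphisms.
Set Implicit Arguments. Unset Strict Implicit. Unset Printing Implicit Defensive.

(** * Multi types as multisets *)

Fixpoint ltype_nested_ind (P : ltype -> Prop) (PN : P TN)
    (PA : forall M L, List.Forall P M -> P L -> P (TArr M L)) (L : ltype) : P L :=
  match L with
  | TN => PN
  | TArr M L' =>
      PA M L' ((fix all_P M : List.Forall P M :=
                  if M is L0 :: M0 then List.Forall_cons L0 (ltype_nested_ind PN PA L0) (all_P M0)
                  else List.Forall_nil P) M)
         (ltype_nested_ind PN PA L')
  end.

Fixpoint tree_of_ltype (L : ltype) : GenTree.tree unit :=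
  if L is TArr M L' then GenTree.Node 1 (tree_of_ltype L' :: map tree_of_ltype M)
  else GenTree.Node 0 [::].

Fixpoint ltype_of_tree (T : GenTree.tree unit) : ltype :=
  if T is GenTree.Node 1 (T' :: Ts) then TArr (map ltype_of_tree Ts) (ltype_of_tree T')
  else TN.

Lemma tree_of_ltypeK : cancel tree_of_ltype ltype_of_tree.
Proof.
elim/ltype_nested_ind => //= M L HM ->; congr TArr; rewrite -map_comp.
by elim: HM => //= L' M' -> _ ->.
Qed.

HB.instance Definition _ := Equality.copy ltype (can_type tree_of_ltypeK).

Scheme teq_mut := Induction for teq Sort Prop
with meq_mut := Induction for meq Sort Prop.
Combined Scheme teq_meq_ind from teq_mut, meq_mut.

Lemma teq_refl L : teq L L.
Proof.
elim/ltype_nested_ind: L => [|M L HM HL]; first exact: teq_n.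
apply: teq_arr HL; elim: HM => [|L' M' HL' _ IH]; [exact: meq_nil | exact: meq_skip].
Qed.

Lemma meq_refl M : meq M M.
Proof. by elim: M => [|L M IH]; [exact: meq_nil | exact: meq_skip (teq_refl L) IH]. Qed.

#[export] Hint Resolve teq_refl meq_refl : core.

Lemma teq_meq_sym :
  (forall L L', teq L L' -> teq L' L) /\ (forall M M', meq M M' -> meq M' M).
Proof.
apply: teq_meq_ind => [|M M' L L' _ HM _ HL||L L' M M' _ HL _ HM|L1 L2 M
  |M1 M2 M3 _ H12 _ H23].
- exact: teq_n.
- exact: teq_arr.
- exact: meq_nil.
- exact: meq_skip.
- exact: meq_swap.
- exact: meq_trans H23 H12.
Qed.

#[export] Instance meq_equiv : Equivalence meq.
Proof. by split; [exact: meq_refl | exact: (proj2 teq_meq_sym) | exact: meq_trans]. Qed.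

Lemma meq_catl A A' B : meq A A' -> meq (A ++ B) (A' ++ B).
Proof.
elim=> [|L L' M M' HL _ IH|L1 L2 M|M1 M2 M3 _ IH1 _ IH2] /=.
- by [].
- exact: meq_skip.
- exact: meq_swap.
- exact: meq_trans IH1 IH2.
Qed.

Lemma meq_catr A B B' : meq B B' -> meq (A ++ B) (A ++ B').
Proof. by elim: A => //= L A IH HB; apply: meq_skip (teq_refl L) (IH HB). Qed.

#[export] Instance cat_meq_proper : Proper (meq ==> meq ==> meq) (@cat ltype).
Proof. by move=> A A' HA B B' HB; apply: meq_trans (meq_catl _ HA) (meq_catr _ HB). Qed.

#[export] Instance cons_meq_proper : Proper (eq ==> meq ==> meq) (@cons ltype).
Proof. by move=> L _ <- M M' HM; apply: meq_skip (teq_refl L) HM. Qed.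

Lemma meq_cons_cat L M1 M2 : meq (L :: M1 ++ M2) (M1 ++ L :: M2).
Proof. by elim: M1 => [|L' M1 IH] //=; rewrite -IH; exact: meq_swap. Qed.

Lemma perm_meq M M' : perm_eq M M' -> meq M M'.
Proof.
elim: M M' => [|L M IH] M' HM.
  by case: M' HM => [_|L M' /perm_size] //; exact: meq_nil.
have HL : L \in M' by rewrite -(perm_mem HM) mem_head.
move: HM; case/splitPr: HL => M1 M2 HM.
have /IH -> : perm_eq M (M1 ++ M2).
  by rewrite -(perm_cons L) (perm_trans HM) // perm_sym -cat1s perm_catCA.
exact: meq_cons_cat.
Qed.

Lemma meq_size M M' : meq M M' -> size M = size M'.
Proof. by elim=> //= *; congruence. Qed.

Ltac meq_perm := apply: perm_meq; apply/permP => ?; rewrite /= ?count_cat /=; lia.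

(** * Typing up to reordering *)

Definition ceq (G G' : tctx) := forall i, meq (G i) (G' i).
Definition cshiftn (d : nat) (G : tctx) : tctx := fun i => G (d + i).

#[export] Instance ceq_equiv : Equivalence ceq.
Proof.
split=> [G i|G G' H i|G1 G2 G3 H12 H23 i]; first by reflexivity.
- by symmetry.
- exact: meq_trans (H12 i) (H23 i).
Qed.

(* Multisets are lists in [typing], so derivations only match up to reordering;
   [cty] builds in the conversion rules, making every inversion lemma exact up
   to [ceq] and [teq]. *)
Inductive cty : tctx -> nat -> nat -> term -> ltype -> Prop :=
| cty_ax i L : cty (single i L) 0 1 (Var i) L
| cty_axlam b : cty empty_ctx 0 0 (Lam b) TN
| cty_lam G m e b L : cty G m e b L -> cty (cshiftn 1 G) m e (Lam b) (TArr (G 0) L)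
| cty_app G D m e m' e' t u M L :
    cty G m e t (TArr M L) -> ctym D m' e' u (TN :: M) ->
    cty (cunion G D) (m + m' + 1) (e + e') (App t u) L
| cty_es G D m e m' e' t u L :
    cty G m e t L -> ctym D m' e' u (TN :: G 0) ->
    cty (cunion (cshiftn 1 G) D) (m + m') (e + e') (ES t u) L
| cty_conv G G' m e t L L' : cty G m e t L -> ceq G G' -> teq L L' -> cty G' m e t L'
with ctym : tctx -> nat -> nat -> term -> seq ltype -> Prop :=
| ctym_nil t : ctym empty_ctx 0 0 t [::]
| ctym_cons G D m e m' e' t L M :
    cty G m e t L -> ctym D m' e' t M -> ctym (cunion G D) (m + m') (e + e') t (L :: M)
| ctym_conv G G' m e t M : ctym G m e t M -> ceq G G' -> ctym G' m e t M.

Scheme cty_mut := Induction for cty Sort Prop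
with ctym_mut := Induction for ctym Sort Prop.
Combined Scheme cty_ctym_ind from cty_mut, ctym_mut.

Lemma cty_ceq G G' m e t L : cty G m e t L -> ceq G G' -> cty G' m e t L.
Proof. by move=> H HG; apply: cty_conv H HG (teq_refl L). Qed.

Lemma cty_teq G m e t L L' : cty G m e t L -> teq L L' -> cty G m e t L'.
Proof. by move=> H; apply: cty_conv H _. Qed.

Lemma ctym_nil_inv G m e t : ctym G m e t [::] -> [/\ ceq G empty_ctx, m = 0 & e = 0].
Proof.
move=> H; remember [::] as M eqn:EM.
elim: H EM => // [t' _|G0 G' m0 e0 t' M0 _ IH HG EM]; first by split=> // i.
by have [HG0 -> ->] := IH EM; split=> //; rewrite -HG.
Qed.

Lemma ctym_cons_inv G m e t L M : ctym G m e t (L :: M) ->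
  exists G1 D m1 e1 m2 e2, [/\ ceq G (cunion G1 D), cty G1 m1 e1 t L, ctym D m2 e2 t M,
    m = m1 + m2 & e = e1 + e2].
Proof.
move=> H; remember (L :: M) as LM eqn:E; elim: H L M E => //
  [G1 D m1 e1 m2 e2 t' L' M' H1 H2 _ L M [<- <-]|G1 G2 m0 e0 t' M' _ IH HG L M E].
- by exists G1, D, m1, e1, m2, e2; split=> // i.
- have [G3 [D [m1 [e1 [m2 [e2 [HG3 H1 H2 -> ->]]]]]]] := IH _ _ E.
  by exists G3, D, m1, e1, m2, e2; split=> //; rewrite -HG.
Qed.

Lemma ctym_single G m e t L : ctym G m e t [:: L] <-> cty G m e t L.
Proof.
split=> [/ctym_cons_inv [G1 [D [m1 [e1 [m2 [e2 [HG H1 /ctym_nil_inv [HD -> ->] -> ->]]]]]]]|H].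
  by rewrite !addn0; apply: cty_ceq H1 _ => i; rewrite (HG i) /cunion (HD i) cats0.
rewrite -[m]addn0 -[e]addn0; apply: ctym_conv (ctym_cons H (ctym_nil t)) _ => i.
by rewrite /cunion cats0.
Qed.

Lemma ctym_meq G m e t M M' : ctym G m e t M -> meq M M' -> ctym G m e t M'.
Proof.
move=> H HM; elim: HM G m e H => {M M'}
  [//|L L' M M' HL _ IH|L1 L2 M|M1 M2 M3 _ IH12 _ IH23] G m e.
- case/ctym_cons_inv=> [G1 [D [m1 [e1 [m2 [e2 [HG H1 H2 -> ->]]]]]]].
  by apply: ctym_conv (ctym_cons (cty_teq H1 HL) (IH _ _ _ H2)) _; symmetry.
- case/ctym_cons_inv=> [G1 [D [m1 [e1 [m2 [e2 [HG H1]]]]]]].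
  case/ctym_cons_inv=> [G2 [D2 [m3 [e3 [m4 [e4 [HD H2 H3 -> ->]]]]]]] -> ->.
  rewrite addnCA [e1 + _]addnCA.
  apply: ctym_conv (ctym_cons H2 (ctym_cons H1 H3)) _ => i.
  by rewrite (HG i) /cunion (HD i) /cunion; meq_perm.
- by move=> /IH12 /IH23.
Qed.

Scheme typing_mut := Induction for typing Sort Prop
with typing_m_mut := Induction for typing_m Sort Prop.
Combined Scheme typing_typing_m_ind from typing_mut, typing_m_mut.

Lemma typing_cty :
  (forall G m e t L, typing G m e t L -> cty G m e t L) /\
  (forall G m e t M, typing_m G m e t M -> ctym G m e t M).
Proof.
apply: typing_typing_m_ind => [i L|b|G m e b L _ Hb|G D m e m' e' t u M M' L _ Ht _ Hu HM
  |G D m e m' e' t u M' L _ Ht _ Hu HM|t|G D m e m' e' t L M _ Ht _ Hu].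
- exact: cty_ax.
- exact: cty_axlam.
- exact: cty_lam.
- exact: cty_app Ht (ctym_meq Hu HM).
- exact: cty_es Ht (ctym_meq Hu HM).
- exact: ctym_nil.
- exact: ctym_cons.
Qed.

Lemma cty_var_inv G m e i L : cty G m e (Var i) L -> [/\ m = 0, e = 1 & ceq G (single i L)].
Proof.
move=> H; remember (Var i) as t eqn:Et.
elim: H Et => // [j L' [->]|G0 G' m0 e0 t1 L0 L' _ IH HG HL Et]; first by split=> // k.
have [-> -> HG0] := IH Et; split=> // k; rewrite -(HG k) (HG0 k) /single.
by case: (k == i) => //; apply: meq_skip HL meq_nil.
Qed.

Lemma cty_lam_n_inv G m e b : cty G m e (Lam b) TN -> [/\ m = 0, e = 0 & ceq G empty_ctx].
Proof.
move=> H; remember (Lam b) as t eqn:Et; remember TN as L eqn:EL.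
elim: H Et EL => // [b' _ _|G0 G' m0 e0 t1 L0 L' _ IH HG HL Et EL]; first by split=> // k.
have EL0 : L0 = TN by subst; inversion HL.
by have [-> -> HG0] := IH Et EL0; split=> //; rewrite -HG.
Qed.

Lemma cty_lam_inv G m e b M L : cty G m e (Lam b) (TArr M L) ->
  exists G', [/\ cty G' m e b L, meq (G' 0) M & ceq (cshiftn 1 G') G].
Proof.
move=> H; remember (Lam b) as t eqn:Et; remember (TArr M L) as L1 eqn:EL.
elim: H b M L Et EL => // [G0 m0 e0 b0 L0 H0 _ b M L [<-] [<- <-]|
  G0 G' m0 e0 t1 L0 L' _ IH HG HL b M L Et EL]; first by exists G0; split=> // i.
subst; inversion HL as [|M0 M1 L2 L3 HM0 HL2]; subst.
have [G1 [H1 HM1 HG1]] := IH _ _ _ erefl erefl.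
by exists G1; split; [exact: cty_teq H1 HL2 | rewrite HM1 | rewrite HG1].
Qed.

Lemma cty_app_inv G m e t u L : cty G m e (App t u) L ->
  exists G1 D m1 e1 m2 e2 M, [/\ cty G1 m1 e1 t (TArr M L), ctym D m2 e2 u (TN :: M),
    ceq G (cunion G1 D), m = m1 + m2 + 1 & e = e1 + e2].
Proof.
move=> H; remember (App t u) as t0 eqn:Et; elim: H t u Et => //
  [G1 D m1 e1 m2 e2 t u M L' H1 _ H2 t' u' [<- <-]|G0 G' m0 e0 t1 L0 L' _ IH HG HL t u Et].
  by exists G1, D, m1, e1, m2, e2, M; split=> // i.
have [G1 [D [m1 [e1 [m2 [e2 [M [H1 H2 HG0 -> ->]]]]]]]] := IH _ _ Et.
exists G1, D, m1, e1, m2, e2, M; split=> //; last by rewrite -HG.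
by apply: cty_teq H1 _; apply: teq_arr HL.
Qed.

Lemma cty_es_inv G m e t u L : cty G m e (ES t u) L ->
  exists G1 D m1 e1 m2 e2, [/\ cty G1 m1 e1 t L, ctym D m2 e2 u (TN :: G1 0),
    ceq G (cunion (cshiftn 1 G1) D), m = m1 + m2 & e = e1 + e2].
Proof.
move=> H; remember (ES t u) as t0 eqn:Et; elim: H t u Et => //
  [G1 D m1 e1 m2 e2 t u L' H1 _ H2 t' u' [<- <-]|G0 G' m0 e0 t1 L0 L' _ IH HG HL t u Et].
  by exists G1, D, m1, e1, m2, e2; split=> // i.
have [G1 [D [m1 [e1 [m2 [e2 [H1 H2 HG0 -> ->]]]]]]] := IH _ _ Et.
by exists G1, D, m1, e1, m2, e2; split=> //; [exact: cty_teq H1 HL | rewrite -HG].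
Qed.

(** * Renaming *)

Definition ctx_bound (G : tctx) (N : nat) := forall i, N <= i -> G i = [::].

Lemma cty_ctx_notin :
  (forall G m e t L, cty G m e t L -> forall i, ~~ occurs i t -> G i = [::]) /\
  (forall G m e t M, ctym G m e t M -> forall i, ~~ occurs i t -> G i = [::]).
Proof.
apply: cty_ctym_ind => //=
  [j L i|G m e b L _ IH i /IH //|G D m e m' e' t u M L _ IH1 _ IH2 i
  |G D m e m' e' t u L _ IH1 _ IH2 i|G G' m e t L L' _ IH HG _ i /IH HGi
  |G D m e m' e' t L M _ IH1 _ IH2 i Hi|G G' m e t M _ IH HG i /IH HGi].
- by rewrite /single eq_sym => /negbTE ->.
- by rewrite negb_or => /andP [/IH1 HG /IH2 HD]; rewrite /cunion HG HD.
- by rewrite negb_or => /andP [/IH1 HG /IH2 HD]; rewrite /cunion /cshiftn HG HD.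
- by move: (HG i); rewrite HGi => /meq_size; case: (G' i).
- by rewrite /cunion IH1 // IH2.
- by move: (HG i); rewrite HGi => /meq_size; case: (G' i).
Qed.

Lemma occurs_bounded t : exists N, forall i, N <= i -> ~~ occurs i t.
Proof.
elim: t => [n|b [N IH]|t [N1 IH1] u [N2 IH2]|t [N1 IH1] u [N2 IH2]] /=.
- by exists n.+1 => i Hi; apply/eqP => E; subst; lia.
- by exists N => i Hi; apply: IH; lia.
- by exists (maxn N1 N2) => i Hi; rewrite negb_or IH1 ?IH2 //; lia.
- by exists (maxn N1 N2) => i Hi; rewrite negb_or IH1 ?IH2 //; lia.
Qed.

Lemma cty_ctx_bound G m e t L : cty G m e t L -> exists N, ctx_bound G N.
Proof.
by move=> H; have [N HN] := occurs_bounded t; exists N => i /HN /(proj1 cty_ctx_notin _ _ _ _ _ H).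
Qed.

Lemma ctym_ctx_bound G m e t M : ctym G m e t M -> exists N, ctx_bound G N.
Proof.
by move=> H; have [N HN] := occurs_bounded t; exists N => i /HN /(proj2 cty_ctx_notin _ _ _ _ _ H).
Qed.

(* The context of [ren f t] when [t] is typed in [G]: variable [j] collects the
   types of all [i < N] with [f i = j], where [N] bounds the support of [G]. *)
Fixpoint push (f : nat -> nat) (N : nat) (G : tctx) (j : nat) : seq ltype :=
  if N is N'.+1 then push f N' G j ++ (if f N' == j then G N' else [::]) else [::].

Lemma push_none f N G j : (forall k, k < N -> f k = j -> G k = [::]) -> push f N G j = [::].
Proof.
elim: N => //= N IH H; rewrite IH => [|k Hk]; last by apply: H; lia.
by case: eqP => // /(H N (ltnSn N)).
Qed.

Lemma push_one f N G k0 : (N <= k0 -> G k0 = [::]) ->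
  (forall k, k < N -> f k = f k0 -> k <> k0 -> G k = [::]) -> push f N G (f k0) = G k0.
Proof.
elim: N => [|N IH] /= Hout Hin; first by rewrite Hout.
have [Ek|Hne] := eqVneq N k0.
  by subst k0; rewrite eqxx push_none // => k Hk Hf; apply: Hin => //; lia.
rewrite IH => [|Hle|k Hk Hf]; last by apply: Hin => //; lia.
- by case: eqP => [Hf|_]; rewrite ?(Hin N) ?cats0 //; apply/eqP.
- by apply: Hout; rewrite ltn_neqAle Hle Hne.
Qed.

Lemma push_cunion f N G D j : meq (push f N (cunion G D) j) (push f N G j ++ push f N D j).
Proof. by elim: N => //= N ->; rewrite /cunion; case: eqP => _ /=; meq_perm. Qed.

Lemma push_ceq f N G G' : ceq G G' -> ceq (push f N G) (push f N G').
Proof. by move=> H j; elim: N => //= N ->; case: eqP => // _; rewrite (H N). Qed.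

Lemma push_upren0 f N G : push (upren f) N.+1 G 0 = G 0.
Proof. by elim: N => //= N; rewrite cats0. Qed.

Lemma push_uprenS f N G j : push (upren f) N.+1 G j.+1 = push f N (cshiftn 1 G) j.
Proof. by elim: N => //= N ->; rewrite eqSS. Qed.

Lemma push_empty f N : ceq (push f N empty_ctx) empty_ctx.
Proof. by move=> j; rewrite push_none. Qed.

Lemma push_single f N i L : i < N -> ceq (push f N (single i L)) (single (f i) L).
Proof.
move=> Hi j; rewrite /single; case: eqP => [->|Hj].
  by rewrite push_one ?eqxx // => [/(leq_trans Hi)|k _ _ /eqP/negbTE ->]; rewrite ?ltnn.
by rewrite push_none // => k _ Hk; case: eqP => // Eki; case: Hj; rewrite -Hk Eki.
Qed.

Lemma ctx_bound_cunion G D N : ctx_bound (cunion G D) N -> ctx_bound G N /\ ctx_bound D N.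
Proof. by move=> H; split=> i /H; rewrite /cunion; case: (G i). Qed.

Lemma ctx_bound_shift G N : ctx_bound (cshiftn 1 G) N -> ctx_bound G N.+1.
Proof. by move=> H [|i] // /H. Qed.

Lemma ctx_bound_ceq G G' N : ceq G G' -> ctx_bound G' N -> ctx_bound G N.
Proof. by move=> HG H i /H HGi; move: (HG i); rewrite HGi => /meq_size; case: (G i). Qed.

Lemma cty_ren :
  (forall G m e t L, cty G m e t L ->
     forall f N, ctx_bound G N -> cty (push f N G) m e (ren f t) L) /\
  (forall G m e t M, ctym G m e t M ->
     forall f N, ctx_bound G N -> ctym (push f N G) m e (ren f t) M).
Proof.
apply: cty_ctym_ind => /=
  [i L f N HS|b f N _|G m e b L _ IH f N /ctx_bound_shift HS
  |G D m e m' e' t u M L _ IHt _ IHu f N /ctx_bound_cunion [HG HD]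
  |G D m e m' e' t u L _ IHt _ IHu f N /ctx_bound_cunion [/ctx_bound_shift HG HD]
  |G G' m e t L L' _ IH HGG' HL f N HS|t f N _
  |G D m e m' e' t L M _ IHt _ IHu f N /ctx_bound_cunion [HG HD]
  |G G' m e t M _ IH HGG' f N HS].
- have Hi : i < N by rewrite ltnNge; apply/negP => /HS; rewrite /single eqxx.
  by apply: cty_ceq (cty_ax (f i) L) _; symmetry; apply: push_single.
- by apply: cty_ceq (cty_axlam _) _; symmetry; apply: push_empty.
- have := cty_lam (IH (upren f) _ HS); rewrite push_upren0.
  by move/cty_ceq; apply=> j; rewrite /cshiftn push_uprenS.
- by apply: cty_ceq (cty_app (IHt f N HG) (IHu f N HD)) _ => j; rewrite push_cunion.
- have Hu := IHu f N HD; rewrite -(push_upren0 f N G) in Hu.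
  by apply: cty_ceq (cty_es (IHt _ _ HG) Hu) _ => j; rewrite push_cunion /cunion /cshiftn push_uprenS.
- exact: cty_conv (IH f N (ctx_bound_ceq HGG' HS)) (push_ceq f N HGG') HL.
- by apply: ctym_conv (ctym_nil _) _; symmetry; apply: push_empty.
- by apply: ctym_conv (ctym_cons (IHt f N HG) (IHu f N HD)) _ => j; rewrite push_cunion.
- exact: ctym_conv (IH f N (ctx_bound_ceq HGG' HS)) (push_ceq f N HGG').
Qed.

Lemma push_lift_lt k N G j : j < k -> push (fun j => k + j) N G j = [::].
Proof. by move=> Hj; apply: push_none => i _ Hi; lia. Qed.

Lemma push_lift k N G i : ctx_bound G N -> push (fun j => k + j) N G (k + i) = G i.
Proof. by move=> HS; apply: push_one => [/HS //|j _ Hj []]; lia. Qed.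

Lemma push_pred_lt d N G j : j < d -> push (fun j => j.-1 + d) N G j = [::].
Proof. by move=> Hj; apply: push_none => i _ Hi; lia. Qed.

Lemma push_pred d N G i : ctx_bound G N -> G 0 = [::] ->
  push (fun j => j.-1 + d) N G (d + i) = G i.+1.
Proof.
move=> HS HG0; rewrite addnC; apply: (@push_one _ _ _ i.+1) => [/HS //|[|j] _ /= Hj Hne] //.
by case: Hne; lia.
Qed.

(** * Decomposition along evaluation contexts *)

(* The hole of [C] is typed by exactly one subderivation, which may be swapped
   for any derivation of the same type agreeing on the variables bound by [C].
   This fails for holes in argument position, typed by a multi type. *)
Definition ctx_decomp (C : ctx) (L : ltype) (Q : ltype -> Prop) := forall G m e r,
  cty G m e (plug C r) L ->
  exists G0 L0 m0 e0 Gc mc ec, [/\ Q L0, cty G0 m0 e0 r L0, m = mc + m0 /\ e = ec + e0,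
    ceq G (cunion Gc (cshiftn (depth C) G0)) &
    forall r' G0' m' e', cty G0' m' e' r' L0 ->
      (forall i, i < depth C -> meq (G0' i) (G0 i)) ->
      cty (cunion Gc (cshiftn (depth C) G0')) (mc + m') (ec + e') (plug C r') L].

Lemma ctx_decomp_weaken C L (Q Q' : ltype -> Prop) :
  ctx_decomp C L Q -> (forall L0, Q L0 -> Q' L0) -> ctx_decomp C L Q'.
Proof.
move=> HC HQ G m e r /HC [G0 [L0 [m0 [e0 [Gc [mc [ec [/HQ HQ' H0 Hme HG HR]]]]]]]].
by exists G0, L0, m0, e0, Gc, mc, ec.
Qed.

Lemma ctx_decomp_hole L : ctx_decomp Hole L (eq L).
Proof.
by move=> G m e r H; exists G, L, m, e, empty_ctx, 0, 0; split.
Qed.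

Lemma plug_cplug C D r : plug (cplug C D) r = plug C (plug D r).
Proof. by elim: C => //= [C -> t|t C ->|C -> t|t C ->]. Qed.

Lemma depth_cplug C D : depth (cplug C D) = depth C + depth D.
Proof. by elim: C => //= C -> t. Qed.

Lemma ctx_decomp_cplug C D L Q Q' : ctx_decomp C L Q ->
  (forall L0, Q L0 -> ctx_decomp D L0 Q') -> ctx_decomp (cplug C D) L Q'.
Proof.
move=> HC HD G m e r; rewrite plug_cplug depth_cplug => H.
have [G0 [L0 [m0 [e0 [Gc [mc [ec [HQ H0 [-> ->] HG HR]]]]]]]] := HC _ _ _ _ H.
have [G1 [L1 [m1 [e1 [Gd [md [ed [HQ' H1 [-> ->] HG0 HR0]]]]]]]] := HD _ HQ _ _ _ _ H0.
exists G1, L1, m1, e1, (cunion Gc (cshiftn (depth C) Gd)), (mc + md), (ec + ed).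
split=> //; first by split; lia.
  by move=> i; rewrite (HG i) /cunion /cshiftn (HG0 _) /cunion /cshiftn addnCA addnA catA.
move=> r' G1' m' e' H' Hag.
have Hag0 i : i < depth C -> meq (cunion Gd (cshiftn (depth D) G1') i) (G0 i).
  by move=> Hi; rewrite (HG0 i) /cunion /cshiftn Hag //; lia.
have := HR _ _ _ _ (HR0 _ _ _ _ H' (fun i Hi => Hag i (ltn_addl _ Hi))) Hag0.
rewrite plug_cplug !addnA; move/cty_ceq; apply=> i.
by rewrite /cunion /cshiftn addnCA addnA catA.
Qed.

Lemma cty_es_body G1 G1' D m1 e1 m2 e2 t u L : ctym D m2 e2 u (TN :: G1 0) ->
  cty G1' m1 e1 t L -> meq (G1' 0) (G1 0) ->
  cty (cunion (cshiftn 1 G1') D) (m1 + m2) (e1 + e2) (ES t u) L.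
Proof. by move=> Hu Ht H0; apply: cty_es Ht (ctym_meq Hu _); rewrite H0. Qed.

Lemma answer_cty a G m e : answer a -> cty G m e a TN -> [/\ m = 0, e = 0 & ceq G empty_ctx].
Proof.
move=> Ha; elim: Ha G m e => [b|a1 a2 _ IH1 _ IH2] G m e; first exact: cty_lam_n_inv.
case/cty_es_inv=> [G1 [D [m1 [e1 [m2 [e2 [H1 H2 HG -> ->]]]]]]].
have [-> -> HG1] := IH1 _ _ _ H1.
have /ctym_single /IH2 [-> -> HD] : ctym D m2 e2 a2 [:: TN] by apply: ctym_meq H2 _; rewrite (HG1 0).
by split=> // i; rewrite (HG i) /cunion /cshiftn (HG1 _) (HD i).
Qed.

Lemma ctx_decomp_appl t L : ctx_decomp (CAppL Hole t) L (fun _ => True).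
Proof.
move=> G m e r /cty_app_inv [G1 [D [m1 [e1 [m2 [e2 [M [H1 H2 HG -> ->]]]]]]]].
exists G1, (TArr M L), m1, e1, D, (m2 + 1), e2; split=> //; first by split; lia.
  by move=> i; rewrite (HG i) /cunion /cshiftn add0n; meq_perm.
move=> r' G0' m' e' H' _; have -> : m2 + 1 + m' = m' + m2 + 1 by lia.
by rewrite [e2 + _]addnC; apply: cty_ceq (cty_app H' H2) _ => i; rewrite /cunion /cshiftn add0n; meq_perm.
Qed.

Lemma ctx_decomp_esl t L : ctx_decomp (CESL Hole t) L (eq L).
Proof.
move=> G m e r /cty_es_inv [G1 [D [m1 [e1 [m2 [e2 [H1 H2 HG -> ->]]]]]]].
exists G1, L, m1, e1, D, m2, e2; split=> //; first by split; lia.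
  by move=> i; rewrite (HG i) /cunion; meq_perm.
move=> r' G0' m' e' H' Hag; rewrite addnC [e2 + _]addnC.
by apply: cty_ceq (cty_es_body H2 H' (Hag 0 isT)) _ => i; rewrite /cunion; meq_perm.
Qed.

Lemma ctx_decomp_esr a : answer a -> ctx_decomp (CESR a Hole) TN (eq TN).
Proof.
move=> Ha G m e r /cty_es_inv [G1 [D [m1 [e1 [m2 [e2 [H1 H2 HG -> ->]]]]]]].
have [Em1 Ee1 HG1] := answer_cty Ha H1; subst m1 e1.
have HTN : meq [:: TN] (TN :: G1 0) by rewrite (HG1 0).
exists D, TN, m2, e2, empty_ctx, 0, 0; split=> //.
- by apply/ctym_single; apply: ctym_meq H2 _; symmetry.
- by move=> i; rewrite (HG i) /cunion /cshiftn (HG1 _) add0n.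
move=> r' G0' m' e' /ctym_single H' _.
by apply: cty_ceq (cty_es H1 (ctym_meq H' HTN)) _ => i; rewrite /cunion /cshiftn (HG1 _) add0n.
Qed.

Lemma N_decomp N : is_N N -> forall L, ctx_decomp N L (fun _ => True).
Proof.
elim=> [|N' t _ IH|N' t _ IH] L.
- exact: ctx_decomp_weaken (@ctx_decomp_hole L) (fun _ _ => I).
- exact: ctx_decomp_cplug (@ctx_decomp_appl t L) (fun L0 _ => IH L0).
- exact: ctx_decomp_cplug (@ctx_decomp_esl t L) (fun L0 _ => IH L0).
Qed.

Lemma A_decomp A : is_A A -> ctx_decomp A TN (eq TN).
Proof.
elim=> [|a A' Ha _ IH|A' t _ IH].
- exact: ctx_decomp_hole.
- by apply: ctx_decomp_cplug (ctx_decomp_esr Ha) _ => _ <-.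
- by apply: ctx_decomp_cplug (@ctx_decomp_esl t TN) _ => _ <-.
Qed.

Lemma Y_decomp Y : is_Y Y -> ctx_decomp Y TN (fun _ => True).
Proof.
move=> [A [N [HA [HN ->]]]].
by apply: ctx_decomp_cplug (A_decomp HA) _ => L0 _; apply: N_decomp.
Qed.

(* Substitution contexts are moreover transparent to the type of the hole. *)
Lemma S_decomp S : is_S S -> forall G m e r L, cty G m e (plug S r) L ->
  exists G0 m0 e0 Gc mc ec, [/\ cty G0 m0 e0 r L, m = mc + m0 /\ e = ec + e0,
    ceq G (cunion Gc (cshiftn (depth S) G0)) &
    forall r' G0' m' e' L', cty G0' m' e' r' L' ->
      (forall i, i < depth S -> meq (G0' i) (G0 i)) ->
      cty (cunion Gc (cshiftn (depth S) G0')) (mc + m') (ec + e') (plug S r') L'].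
Proof.
elim=> [|S' u _ IH] G m e r L /=.
  by move=> H; exists G, m, e, empty_ctx, 0, 0; split.
case/cty_es_inv=> [G1 [D [m1 [e1 [m2 [e2 [H1 H2 HG -> ->]]]]]]].
have [G0 [m0 [e0 [Gc [mc [ec [H0 [-> ->] HG1 HR]]]]]]] := IH _ _ _ _ _ H1.
exists G0, m0, e0, (cunion (cshiftn 1 Gc) D), (mc + m2), (ec + e2).
split=> //; first by split; lia.
  by move=> i; rewrite (HG i) /cunion /cshiftn (HG1 _) /cunion /cshiftn add1n -addSnnS; meq_perm.
move=> r' G0' m' e' L' H' Hag.
have H0' : meq (cunion Gc (cshiftn (depth S') G0') 0) (G1 0).
  by rewrite (HG1 0) /cunion /cshiftn !addn0 (Hag (depth S')).
have := cty_es_body H2 (HR _ _ _ _ _ H' (fun i Hi => Hag i (ltnW Hi))) H0'.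
rewrite addnAC [ec + _ + _]addnAC; move/cty_ceq; apply=> i.
by rewrite /cunion /cshiftn add1n -addSnnS; meq_perm.
Qed.

(** * Quantitative subject reduction *)

Definition subject_reduction (P : ltype -> Prop) (dm de : nat) (r r' : term) :=
  forall G m e L, P L -> cty G m e r L ->
  exists m' e', [/\ cty G m' e' r' L, m = m' + dm & e = e' + de].

Lemma subject_reduction_ctx C L Q dm de r r' : ctx_decomp C L Q ->
  subject_reduction Q dm de r r' -> subject_reduction (eq L) dm de (plug C r) (plug C r').
Proof.
move=> HC Hr G m e _ <- /HC [G0 [L0 [m0 [e0 [Gc [mc [ec [HQ H0 [-> ->] HG HR]]]]]]]].
have [m1 [e1 [H1 -> ->]]] := Hr _ _ _ _ HQ H0.
exists (mc + m1), (ec + e1); split; [|lia|lia].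
by apply: cty_ceq (HR _ _ _ _ H1 (fun i _ => meq_refl _)) _; rewrite HG.
Qed.

Lemma root_m_sr r r' : root_m r r' -> subject_reduction (fun _ => True) 1 0 r r'.
Proof.
move=> [S [b [u [HS [-> ->]]]]] G m e L _ /cty_app_inv.
move=> [G1 [D [m1 [e1 [m2 [e2 [M [H1 H2 HG -> ->]]]]]]]].
have [G0 [m0 [e0 [Gc [mc [ec [H0 [-> ->] HG1 HR]]]]]]] := S_decomp HS H1.
have [Gb [Hb HbM HGb]] := cty_lam_inv H0.
have [N HN] := ctym_ctx_bound H2.
set d := depth S in HG1 HR *.
have Hu := proj2 cty_ren _ _ _ _ _ H2 (fun j => d + j) N HN.
have HM : meq (TN :: M) (TN :: Gb 0) by rewrite HbM.
have Hag i : i < d -> meq (cunion (cshiftn 1 Gb) (push (fun j => d + j) N D) i) (G0 i).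
  by move=> Hi; rewrite /cunion push_lift_lt // cats0 (HGb i).
have := HR _ _ _ _ _ (cty_es Hb (ctym_meq Hu HM)) Hag.
move/cty_ceq => H'; exists (mc + (m0 + m2)), (ec + (e0 + e2)); split; [apply: H' => i|lia|lia].
rewrite (HG i) /cunion (HG1 i) /cunion /cshiftn push_lift // -(HGb (d + i)) /cshiftn.
meq_perm.
Qed.

Lemma root_gcv_sr r r' : root_gcv r r' -> subject_reduction (fun _ => True) 0 0 r r'.
Proof.
move=> [b [S [v [HS [[b0 ->] [-> [Hocc ->]]]]]]] G m e L _ /cty_es_inv.
move=> [G1 [D [m1 [e1 [m2 [e2 [H1 H2 HG -> ->]]]]]]].
(* As [b] ignores the substitution, the value is typed once, at [TN]. *)
have HG10 : G1 0 = [::] := proj1 cty_ctx_notin _ _ _ _ _ H1 _ Hocc.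
move: H2; rewrite HG10 => /ctym_single H2.
have [G0 [m0 [e0 [Gc [mc [ec [H0 [-> ->] HD HR]]]]]]] := S_decomp HS H2.
have [Em0 Ee0 HG0] := cty_lam_n_inv H0; subst m0 e0.
have [N HN] := cty_ctx_bound H1.
set d := depth S in HD HR *.
have Hb := proj1 cty_ren _ _ _ _ _ H1 (fun j => j.-1 + d) N HN.
have Hag i : i < d -> meq (push (fun j => j.-1 + d) N G1 i) (G0 i).
  by move=> Hi; rewrite push_pred_lt // (HG0 i).
move/cty_ceq: (HR _ _ _ _ _ Hb Hag) => H'; exists (mc + m1), (ec + e1).
split; [apply: H' => i|lia|lia].
by rewrite (HG i) /cunion (HD i) /cunion /cshiftn push_pred // (HG0 _) add1n; meq_perm.
Qed.

Lemma root_e_sr (K : ctx -> Prop) (P : ltype -> Prop) r r' :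
  (forall C L, K C -> P L -> ctx_decomp C L (fun _ => True)) ->
  root_e K r r' -> subject_reduction P 0 1 r r'.
Proof.
move=> HK [C [u [HC [-> ->]]]] G m e L HP /cty_es_inv.
move=> [G1 [D [m1 [e1 [m2 [e2 [H1 H2 HG -> ->]]]]]]].
have [G0 [L0 [m0 [e0 [Gc [mc [ec [_ H0 [-> ->] HG1 HR]]]]]]]] := HK _ _ HC HP _ _ _ _ H1.
have [Em0 Ee0 HG0] := cty_var_inv H0; subst m0 e0.
set d := depth C in HG1 HR *.
(* The multi type of [u] contains the type [L0] of the replaced occurrence. *)
have HM : meq (TN :: G1 0) (L0 :: TN :: Gc 0).
  by rewrite (HG1 0) /cunion /cshiftn addn0 (HG0 d) /single eqxx; meq_perm.
case/ctym_cons_inv: (ctym_meq H2 HM) => [Du [Dr [mu [eu [mr [er [HD Hu Hr -> ->]]]]]]].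
have [N HN] := cty_ctx_bound Hu.
have Hl := proj1 cty_ren _ _ _ _ _ Hu (fun j => d.+1 + j) N HN.
have Hag i : i < d -> meq (push (fun j => d.+1 + j) N Du i) (G0 i).
  by move=> Hi; rewrite push_lift_lt ?(HG0 i) /single ?(ltn_eqF Hi) // ltnS ltnW.
have H0' : meq (cunion Gc (cshiftn d (push (fun j => d.+1 + j) N Du)) 0) (Gc 0).
  by rewrite /cunion /cshiftn addn0 push_lift_lt // cats0.
move/cty_ceq: (cty_es_body Hr (HR _ _ _ _ Hl Hag) H0') => H'.
exists (mc + mu + mr), (ec + eu + er); split; [apply: H' => i|lia|lia].
rewrite (HG i) /cunion /cshiftn (HG1 _) (HD i) /cunion /cshiftn (HG0 _) /single.
have -> : d + (1 + i) == d = false by apply/eqP; lia.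
by rewrite add1n -addSnnS push_lift //; meq_perm.
Qed.

Lemma ystep_sr l t t' G m e : ystep l t t' -> cty G m e t TN ->
  exists m' e', [/\ cty G m' e' t' TN, m = m' + is_m_lab l & e = e' + is_e_lab l].
Proof.
move=> [C [r [r' [-> [-> Hl]]]]] H.
case: l Hl => [[HY Hr]|[HA Hr]|[HY Hr]|[HY Hr]].
- exact: subject_reduction_ctx (Y_decomp HY) (root_m_sr Hr) _ _ _ _ erefl H.
- apply: subject_reduction_ctx (A_decomp HA) (root_e_sr _ Hr) _ _ _ _ erefl H.
  by move=> C' _ HC' <-; apply: Y_decomp.
- apply: subject_reduction_ctx (Y_decomp HY) (root_e_sr _ Hr) _ _ _ _ erefl H.
  by move=> C' L' HC' _; apply: N_decomp.
- exact: subject_reduction_ctx (Y_decomp HY) (root_gcv_sr Hr) _ _ _ _ erefl H.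
Qed.

Fixpoint tsize (t : term) : nat :=
  match t with
  | Var _ => 1
  | Lam b => (tsize b).+1
  | App t u | ES t u => (tsize t + tsize u).+1
  end.

Lemma tsize_ren f t : tsize (ren f t) = tsize t.
Proof. by elim: t f => //= [b IH|t IHt u IHu|t IHt u IHu] f; rewrite ?IH ?IHt ?IHu. Qed.

Lemma tsize_plug C r r' : tsize (plug C r) + tsize r' = tsize (plug C r') + tsize r.
Proof. by elim: C => /= *; lia. Qed.

Lemma ystep_gcv_size t t' : ystep Ygcv t t' -> tsize t' < tsize t.
Proof.
move=> [C [r [r' [-> [-> [_ [b [S [v [_ [[b0 ->] [-> [_ ->]]]]]]]]]]]]].
set b' := ren _ b.
have := tsize_plug C (ES b (plug S (Lam b0))) (plug S b').
have := tsize_plug S (Lam b0) b'.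
by rewrite /= tsize_ren; lia.
Qed.

(** * Progress *)

Lemma cplugA C D E : cplug (cplug C D) E = cplug C (cplug D E).
Proof. by elim: C => //= [C -> t|t C ->|C -> t|t C ->]. Qed.

Lemma is_A_cplug A A' : is_A A -> is_A A' -> is_A (cplug A A').
Proof. by move=> HA HA'; elim: HA => //= [a A0 Ha _ IH|A0 t _ IH]; [apply: A_ans | apply: A_es]. Qed.

Lemma is_Y_cplug A Y : is_A A -> is_Y Y -> is_Y (cplug A Y).
Proof.
move=> HA [A' [N [HA' [HN ->]]]]; exists (cplug A A'), N.
by rewrite cplugA; split=> //; apply: is_A_cplug.
Qed.

Lemma is_N_Y N : is_N N -> is_Y N.
Proof. by move=> HN; exists Hole, N; split=> //; apply: A_hole. Qed.

Lemma ystep_plug_A A l t t' : is_A A -> ystep l t t' -> ystep l (plug A t) (plug A t').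
Proof.
move=> HA [C [r [r' [-> [-> Hl]]]]]; exists (cplug A C), r, r'; rewrite !plug_cplug.
by do 2 split=> //; case: l Hl => [] [HC Hr]; split=> //;
  [apply: is_Y_cplug | apply: is_A_cplug | apply: is_Y_cplug | apply: is_Y_cplug].
Qed.

Definition stuck_in (K : ctx -> Prop) (t : term) :=
  exists C k, [/\ K C, depth C <= k & t = plug C (Var k)].

Definition n_redex (t : term) :=
  exists N r r', [/\ is_N N, t = plug N r & root_m r r' \/ root_e is_N r r'].

Lemma n_redex_ystep t : n_redex t -> exists l t', ystep l t t'.
Proof.
move=> [N [r [r' [HN -> [Hr|Hr]]]]].
- by exists YM, (plug N r'), N, r, r'; do 2 split=> //; split=> //; apply: is_N_Y.
- by exists YeYN, (plug N r'), N, r, r'; do 2 split=> //; split=> //; apply: is_N_Y.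
Qed.

Lemma N_progress t : stuck_in is_N t \/ n_redex t \/ exists S b, is_S S /\ t = plug S (Lam b).
Proof.
elim: t => [k|b _|t IH u _|t IH u _].
- by left; exists Hole, k; split=> //; apply: N_hole.
- by right; right; exists Hole, b; split=> //; apply: S_hole.
- case: IH => [[N [k [HN Hk ->]]]|[[N [r [r' [HN -> Hr]]]]|[S [b [HS ->]]]]].
  + by left; exists (CAppL N u), k; split=> //; apply: N_app.
  + by right; left; exists (CAppL N u), r, r'; split=> //; apply: N_app.
  + right; left; exists Hole, (App (plug S (Lam b)) u), (plug S (ES b (Defs.lift (depth S) u))).
    by split=> //; [apply: N_hole | left; exists S, b, u].
- case: IH => [[N [k [HN Hk ->]]]|[[N [r [r' [HN -> Hr]]]]|[S [b [HS ->]]]]].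
  + have [<-|Hne] := eqVneq (depth N) k.
      right; left; exists Hole, (ES (plug N (Var (depth N))) u).
      exists (ES (plug N (Defs.lift (depth N).+1 u)) u).
      by split=> //; [apply: N_hole | right; exists N, u].
    by left; exists (CESL N u), k; split=> //; [apply: N_es | rewrite ltn_neqAle Hne].
  + by right; left; exists (CESL N u), r, r'; split=> //; apply: N_es.
  + by right; right; exists (CESL S u), b; split=> //; apply: S_es.
Qed.

Lemma lam_w_normal b : w_normal (Lam b).
Proof.
move=> [t' [C [r [r' [_ [E [_ Hr]]]]]]]; case: C E => //= Er.
by case: Hr => [[S [? [? [_ [E _]]]]]|[[C [? [_ [E _]]]]|[? [? [? [_ [_ [E _]]]]]]]];
  rewrite -Er in E.
Qed.

Lemma answer_plug_var a C k : answer a -> a <> plug C (Var k).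
Proof.
move=> Ha; elim: Ha C => [b|a1 a2 _ IH1 _ IH2] [|C t|t C|C t|t C] //= [].
- by move=> /IH1.
- by move=> _ /IH2.
Qed.

Lemma es_w_normal a u : answer a -> w_normal a -> w_normal u -> occurs 0 a -> w_normal (ES a u).
Proof.
move=> Ha Hwa Hwu Hocc [t' [C [r [r' [_ [E [E' Hr]]]]]]].
case: C E E' => [|C t|t C|C t|t C] //= E E'.
- case: Hr => [[S [? [? [_ [Er _]]]]]|[[C [? [_ [Er _]]]]|[b [S [v [_ [_ [Er [Hb _]]]]]]]]];
    rewrite -E in Er => //.
  + by case: Er => /(answer_plug_var Ha).
  + by case: Er => Eb _; rewrite -Eb Hocc in Hb.
- by case: E => Ea _; apply: Hwa; exists (plug C r'), C, r, r'.
- by case: E => _ Eu; apply: Hwu; exists (plug C r'), C, r, r'.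
Qed.

Lemma answer_plug_S a : answer a -> exists S b, is_S S /\ a = plug S (Lam b).
Proof.
elim=> [b|a1 a2 _ [S [b [HS ->]]] _ _]; first by exists Hole, b; split=> //; apply: S_hole.
by exists (CESL S a2), b; split=> //; apply: S_es.
Qed.

Lemma progress t :
  stuck_in is_Y t \/ (exists l t', ystep l t t') \/ (answer t /\ w_normal t).
Proof.
elim: t => [k|b _|t _ u _|t IHt u IHu].
- by left; exists Hole, k; split=> //; apply/is_N_Y/N_hole.
- by right; right; split; [apply: ans_val | apply: lam_w_normal].
- case: (N_progress (App t u)) => [[N [k [HN Hk E]]]|[/n_redex_ystep Hs|[S [b [HS E]]]]].
  + by left; exists N, k; split=> //; apply: is_N_Y.
  + by right; left.
  + by case: HS E.
have HAl : is_A (CESL Hole u) by apply/A_es/A_hole.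
case: IHt => [[Y [k [HY Hk ->]]]|[[l [t' Hs]]|[Ha Hwa]]].
- have [<-|Hne] := eqVneq (depth Y) k.
    right; left; exists YeAY, (ES (plug Y (Defs.lift (depth Y).+1 u)) u), Hole.
    by do 2 eexists; do 2 split=> //; split; [apply: A_hole | exists Y, u].
  left; exists (cplug (CESL Hole u) Y), k; split=> //; first exact: is_Y_cplug.
  by rewrite /= ltn_neqAle Hne.
- by right; left; exists l, (plug (CESL Hole u) t'); exact: ystep_plug_A HAl Hs.
have HAr : is_A (CESR t Hole) by apply/A_ans/A_hole.
case: IHu => [[Y [k [HY Hk ->]]]|[[l [u' Hs]]|[Hau Hwu]]].
- by left; exists (cplug (CESR t Hole) Y), k; split=> //; apply: is_Y_cplug.
- by right; left; exists l, (plug (CESR t Hole) u'); exact: ystep_plug_A HAr Hs.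
case Hocc: (occurs 0 t).
  by right; right; split; [apply: ans_es | apply: es_w_normal].
right; left; have [S [b [HS Eu]]] := answer_plug_S Hau.
set t' := plug S (ren (fun j => j.-1 + depth S) t).
exists Ygcv, t', Hole, (ES t u), t'; do 2 split=> //; split; first by apply/is_N_Y/N_hole.
by exists t, S, (Lam b); rewrite Hocc Eu; split=> //; split; [exists b | split].
Qed.

Lemma stuck_untypable t m e : stuck_in is_Y t -> ~ cty empty_ctx m e t TN.
Proof.
move=> [Y [k [HY Hk ->]]] /(Y_decomp HY) [G0 [L0 [m0 [e0 [Gc [mc [ec [_ H0 _ HG _]]]]]]]].
have [_ _ HG0] := cty_var_inv H0.
move: (HG (k - depth Y)); rewrite /cunion /cshiftn subnKC // (HG0 k) /single eqxx.
by move/meq_size; rewrite size_cat addn1.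
Qed.

(** * Normalization *)

Lemma cty_normalizes t m e : cty empty_ctx m e t TN ->
  exists n d, [/\ w_normal n, yseq t d n, count is_m_lab d = m & count is_e_lab d = e].
Proof.
suff IH k s : forall t m e, m + e < k -> tsize t < s -> cty empty_ctx m e t TN ->
  exists n d, [/\ w_normal n, yseq t d n, count is_m_lab d = m & count is_e_lab d = e].
  exact: IH (ltnSn _) (ltnSn _).
elim: k s => [//|k IHk] s; elim: s => [//|s IHs] {}t {}m {}e Hk Hs Ht.
case: (progress t) => [/stuck_untypable /(_ Ht) //|[[l [t' Hst]]|[Ha Hw]]]; last first.
  have [-> -> _] := answer_cty Ha Ht.
  by exists t, [::]; split=> //; apply: ys_nil.
have [m' [e' [Ht' Em Ee]]] := ystep_sr Hst Ht.
have [n [d [Hn Hd Hdm Hde]]] : exists n d,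
    [/\ w_normal n, yseq t' d n, count is_m_lab d = m' & count is_e_lab d = e'].
  case: l Hst Em Ee => Hst /= Em Ee.
  1-3: by apply: (IHk _ t' m' e' _ (ltnSn _) Ht'); lia.
  by apply: (IHs t' m' e' _ _ Ht'); [lia | have := ystep_gcv_size Hst; lia].
by exists n, (l :: d); split=> //=; [apply: ys_cons Hst Hd | rewrite Hdm | rewrite Hde]; lia.
Qed.

Theorem theorem12p5 (t : term) (m e : nat) :
  closed_term t -> typing empty_ctx m e t TN ->
  exists (n : term) (d : seq ylab),
    w_normal n /\ yseq t d n /\ count is_m_lab d = m /\ count is_e_lab d = e.
Proof.
move=> _ /(proj1 typing_cty) /cty_normalizes [n [d [Hn Hd Hm He]]].
by exists n, d.
Qed.
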